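(* Let $A\ge0$ and let $c:[a,b]\times S^1\to\mathbb R^2$ be a smooth horizontal path of immersions ($\langle c_t,c_\theta\rangle\equiv0$), and write $c_t=a\,ic_\theta/|c_\theta|$ with $a$ a smooth real function. Then $c$ satisfies the geodesic equation $$\big((1+A\kappa^2)|c_\theta|c_t\big)_t=\Big(\frac{-1+A\kappa^2}{2}\frac{|c_t|^2}{|c_\theta|}c_\theta+A\frac{(\kappa|c_t|^2)_\theta}{|c_\theta|^2}ic_\theta\Big)_\theta$$ if and only if $$\big((1+A\kappa^2)a\big)_t=\frac{1+3A\kappa^2}{2}\,\kappa a^2+A(\kappa a^2)_{ss},$$ where $f_s:=f_\theta/|c_\theta|$ denotes the arclength derivative. Moreover, along any such horizontal path, $|c_\theta|_t=-a\kappa|c_\theta|$.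
   Context: $S^1=\mathbb R/2\pi\mathbb Z$, $\mathbb R^2\cong\mathbb C$. Subscripts $t,\theta$ are partial derivatives. $\kappa=\kappa_{c(t)}=\det(c_\theta,c_{\theta\theta})/|c_\theta|^3$. *)

From Stdlib Require Import Reals List.
From Coquelicot Require Import Coquelicot.
Open Scope R_scope.

(* A scalar field on (an open neighbourhood of) [t0,t1] x S^1, as a function of
   (t, theta) : R x R; periodicity in theta encodes S^1 = R / 2piZ. *)
Definition F2 := R -> R -> R.

Definition pt (f : F2) : F2 := fun t th => Derive (fun s => f s th) t.
Definition pth (f : F2) : F2 := fun t th => Derive (fun s => f t s) th.

(* iterated partial derivatives: true = d/dt, false = d/dtheta *)
Fixpoint pd (l : list bool) (f : F2) : F2 :=
  match l with
  | nil => f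
  | b :: l' => if b then pt (pd l' f) else pth (pd l' f)
  end.

Definition smooth2 (f : F2) : Prop :=
  forall l : list bool,
    (forall t th, ex_derive (fun s => pd l f s th) t /\
                  ex_derive (fun s => pd l f t s) th) /\
    (forall p : R * R, continuous (fun q : R * R => pd l f (fst q) (snd q)) p).

Definition periodic2 (f : F2) : Prop :=
  forall t th, f t (th + 2 * PI) = f t th.

(* A curve/path c = (cx, cy) in R^2 = C.  i*(u,v) = (-v,u). *)

Definition speed (cx cy : F2) : F2 :=
  fun t th => sqrt ((pth cx t th)^2 + (pth cy t th)^2).

Definition kappa (cx cy : F2) : F2 :=
  fun t th => (pth cx t th * pth (pth cy) t th - pth cy t th * pth (pth cx) t th)
              / (speed cx cy t th)^3.

Definition ct2 (cx cy : F2) : F2 :=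
  fun t th => (pt cx t th)^2 + (pt cy t th)^2.

Definition ds (cx cy : F2) (f : F2) : F2 :=
  fun t th => pth f t th / speed cx cy t th.

Definition geodesic_eq (A : R) (cx cy : F2) (t th : R) : Prop :=
  let k := kappa cx cy in
  let sp := speed cx cy in
  let K2 := ct2 cx cy in
  let W := pth (fun t th => k t th * K2 t th) in
  pt (fun t th => (1 + A * (k t th)^2) * sp t th * pt cx t th) t th =
  pth (fun t th => (-1 + A * (k t th)^2) / 2 * (K2 t th / sp t th) * pth cx t th
                   + A * (W t th / (sp t th)^2) * (- pth cy t th)) t th
  /\
  pt (fun t th => (1 + A * (k t th)^2) * sp t th * pt cy t th) t th =
  pth (fun t th => (-1 + A * (k t th)^2) / 2 * (K2 t th / sp t th) * pth cy t th
                   + A * (W t th / (sp t th)^2) * (pth cx t th)) t th.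

Definition a_eq (A : R) (cx cy a : F2) (t th : R) : Prop :=
  let k := kappa cx cy in
  pt (fun t th => (1 + A * (k t th)^2) * a t th) t th =
  (1 + 3 * A * (k t th)^2) / 2 * k t th * (a t th)^2
  + A * ds cx cy (ds cx cy (fun t th => k t th * (a t th)^2)) t th.

From Stdlib Require Import Reals Lra List.
From Coquelicot Require Import Coquelicot.
Open Scope R_scope.

(* Let n = c_theta/|c_theta| and i n be the unit tangent and normal, so that c_t = a i n and
   the Frenet equations n_theta = kappa |c_theta| i n, (i n)_theta = - kappa |c_theta| n hold.
   On the time interval |c_theta| c_t = a i c_theta, and (i c_theta)_t = i (c_t)_theta
   = - (a n)_theta by symmetry of second derivatives, so the left-hand side of the geodesic
   equation is (G i c_theta)_t with G = (1 + A kappa^2) a.  Its right-hand side is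
   (P n + A (kappa a^2)_s i n)_theta with P = (-1 + A kappa^2) a^2 / 2.  Expanding both sides
   with the Frenet equations, the tangential terms cancel identically and the difference of
   the two sides is R i c_theta, where R is the difference of the two sides of the equation
   for a; since c_theta <> 0, the geodesic equation holds iff R = 0.  Finally
   |c_theta|_t = <n, c_theta_t> = - a kappa |c_theta|. *)

Local Ltac eta_Derive :=
  repeat match goal with
  | |- context [Derive (fun x => ?f x) ?u] => change (Derive (fun x => f x) u) with (Derive f u)
  end.

(* [auto_derive] writes [x ^ 2] as [x * (x * 1)]. *)
Lemma sum_sq_expand x y : x * (x * 1) + y * (y * 1) = x ^ 2 + y ^ 2.
Proof. ring. Qed.

Local Ltac sum_sq_side :=
  rewrite ?sum_sq_expand;
  match goal with
  | |- 0 < _ => auto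
  | |- _ <> 0 => apply Rgt_not_eq; repeat apply Rmult_lt_0_compat; try apply sqrt_lt_R0; auto; lra
  end.

Lemma is_derive_Rmult (f g : R -> R) u df dg :
  is_derive f u df -> is_derive g u dg -> is_derive (fun v => f v * g v) u (df * g u + f u * dg).
Proof. intros Hf Hg. exact (is_derive_mult f g u df dg Hf Hg Rmult_comm). Qed.

Lemma is_derive_Rplus (f g : R -> R) u df dg :
  is_derive f u df -> is_derive g u dg -> is_derive (fun v => f v + g v) u (df + dg).
Proof. intros Hf Hg. exact (is_derive_plus f g u df dg Hf Hg). Qed.

Lemma exists_step_in_interval t0 t1 t d :
  t0 < t1 -> t0 <= t <= t1 -> 0 < d ->
  exists h, h <> 0 /\ Rabs h < d /\ t0 <= t + h <= t1.
Proof.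
intros Ht01 Ht Hd.
destruct (Rlt_or_le t t1) as [Hlt | Hge].
- pose proof (Rmin_l (d / 2) (t1 - t)); pose proof (Rmin_r (d / 2) (t1 - t)).
  assert (0 < Rmin (d / 2) (t1 - t)) by (apply Rmin_glb_lt; lra).
  exists (Rmin (d / 2) (t1 - t)). rewrite Rabs_pos_eq; lra.
- pose proof (Rmin_l (d / 2) (t - t0)); pose proof (Rmin_r (d / 2) (t - t0)).
  assert (0 < Rmin (d / 2) (t - t0)) by (apply Rmin_glb_lt; lra).
  exists (- Rmin (d / 2) (t - t0)). rewrite Rabs_Ropp, Rabs_pos_eq; lra.
Qed.

(* Unlike [is_derive_ext_loc], agreement on a one-sided neighbourhood suffices: this covers
   the endpoints of the time interval. *)
Lemma Derive_eq_on_interval (f g : R -> R) t0 t1 t :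
  t0 < t1 -> t0 <= t <= t1 -> ex_derive f t -> ex_derive g t ->
  (forall r, t0 <= r <= t1 -> f r = g r) -> Derive f t = Derive g t.
Proof.
intros Ht01 Ht Hf Hg Hfg.
apply Rminus_diag_uniq. set (l := Derive f t - Derive g t).
assert (Hl : derivable_pt_lim (fun r => f r - g r) t l).
{ apply is_derive_Reals. auto_derive; [now split |]. eta_Derive. unfold l. ring. }
destruct (Req_dec l 0) as [| Hl0]; [assumption | exfalso].
destruct (Hl (Rabs l) (Rabs_pos_lt _ Hl0)) as [d Hd].
destruct (exists_step_in_interval t0 t1 t d Ht01 Ht (cond_pos d)) as (h & Hh0 & Hhd & Hth).
specialize (Hd h Hh0 Hhd).
rewrite !Hfg in Hd by assumption.
replace ((g (t + h) - g (t + h) - (g t - g t)) / h - l) with (- l) in Hd by (field; exact Hh0).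
rewrite Rabs_Ropp in Hd. lra.
Qed.

Definition smooth1 (f : R -> R) : Prop := forall n u, ex_derive_n f n u.

Lemma smooth1_Derive f : smooth1 f -> smooth1 (Derive f).
Proof.
intros Hf [|n] u; [exact I |].
apply (ex_derive_ext (Derive_n f (S n))); [| exact (Hf (S (S n)) u)].
intro v. rewrite <- Nat.add_1_r. symmetry. exact (Derive_n_comp f n 1 v).
Qed.

Lemma Derive_n_slice f n t u : Derive_n (f t) n u = pd (repeat false n) f t u.
Proof.
revert u; induction n as [|n IH]; intro u; [reflexivity |].
exact (Derive_ext _ _ u IH).
Qed.

Lemma smooth2_slice f t : smooth2 f -> smooth1 (f t).
Proof.
intros Hf [|n] u; [exact I |].
apply (ex_derive_ext (fun s => pd (repeat false n) f t s)).
- intro v. symmetry. apply Derive_n_slice.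
- exact (proj2 (proj1 (Hf (repeat false n)) t u)).
Qed.

Lemma smooth2_ex_derive_t f l t th : smooth2 f -> ex_derive (fun s => pd l f s th) t.
Proof. intros Hf. exact (proj1 (proj1 (Hf l) t th)). Qed.

Lemma smooth2_pt_pth f t th : smooth2 f -> pt (pth f) t th = pth (pt f) t th.
Proof.
intros Hf. apply Schwarz.
- exists (mkposreal 1 Rlt_0_1). intros u v _ _.
  repeat split; [exact (proj1 (proj1 (Hf nil) u v)) | exact (proj2 (proj1 (Hf nil) u v))
               | exact (proj1 (proj1 (Hf (false :: nil)) u v))
               | exact (proj2 (proj1 (Hf (true :: nil)) u v))].
- apply continuity_2d_pt_filterlim. exact (proj2 (Hf (true :: false :: nil)) (t, th)).
- apply continuity_2d_pt_filterlim. exact (proj2 (Hf (false :: true :: nil)) (t, th)).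
Qed.

(* [kappa cx cy t] is convertible to [curvature (pth cx t) (pth cy t)]. *)
Definition curvature (X Y : R -> R) (u : R) : R :=
  (X u * Derive Y u - Y u * Derive X u) / sqrt (X u ^ 2 + Y u ^ 2) ^ 3.

Section FrenetFrame.
Variables (X Y : R -> R) (u : R).
Hypotheses (HX : ex_derive X u) (HY : ex_derive Y u) (Hpos : 0 < X u ^ 2 + Y u ^ 2).

Let norm_pos : 0 < sqrt (X u ^ 2 + Y u ^ 2).
Proof. now apply sqrt_lt_R0. Qed.

Let norm_sq : sqrt (X u ^ 2 + Y u ^ 2) ^ 2 = X u ^ 2 + Y u ^ 2.
Proof. apply pow2_sqrt; lra. Qed.

Local Ltac frenet_derive :=
  unfold curvature; auto_derive; [repeat split; auto; sum_sq_side |];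
  eta_Derive; rewrite sum_sq_expand; field_simplify_eq; [| lra]; rewrite norm_sq; ring.

Lemma is_derive_norm :
  is_derive (fun v => sqrt (X v ^ 2 + Y v ^ 2)) u
    ((X u * Derive X u + Y u * Derive Y u) / sqrt (X u ^ 2 + Y u ^ 2)).
Proof.
auto_derive; [repeat split; auto |].
eta_Derive. rewrite sum_sq_expand. field. lra.
Qed.

Lemma is_derive_tangent_x :
  is_derive (fun v => X v / sqrt (X v ^ 2 + Y v ^ 2)) u (curvature X Y u * - Y u).
Proof. frenet_derive. Qed.

Lemma is_derive_tangent_y :
  is_derive (fun v => Y v / sqrt (X v ^ 2 + Y v ^ 2)) u (curvature X Y u * X u).
Proof. frenet_derive. Qed.

Lemma is_derive_normal_x :
  is_derive (fun v => - Y v / sqrt (X v ^ 2 + Y v ^ 2)) u (- (curvature X Y u * X u)).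
Proof. frenet_derive. Qed.

Lemma is_derive_normal_y :
  is_derive (fun v => X v / sqrt (X v ^ 2 + Y v ^ 2)) u (- (curvature X Y u * Y u)).
Proof.
replace (- (curvature X Y u * Y u)) with (curvature X Y u * - Y u) by ring.
exact is_derive_tangent_x.
Qed.
End FrenetFrame.

Section ArcSlice.
Variables (X Y a : R -> R).
Hypotheses (HX : smooth1 X) (HY : smooth1 Y) (Ha : smooth1 a)
  (Hpos : forall v, 0 < X v ^ 2 + Y v ^ 2).

Let X1 v : ex_derive X v := HX 1%nat v.
Let X2 v : ex_derive (Derive X) v := HX 2%nat v.
Let X3 v : ex_derive (Derive (Derive X)) v := HX 3%nat v.
Let Y1 v : ex_derive Y v := HY 1%nat v.
Let Y2 v : ex_derive (Derive Y) v := HY 2%nat v.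
Let Y3 v : ex_derive (Derive (Derive Y)) v := HY 3%nat v.
Let a1 v : ex_derive a v := Ha 1%nat v.
Let a2 v : ex_derive (Derive a) v := Ha 2%nat v.

Lemma ex_derive_curvature u :
  ex_derive (curvature X Y) u /\ ex_derive (Derive (curvature X Y)) u.
Proof.
assert (HD : exists D, forall v, is_derive (curvature X Y) v (D v) /\ ex_derive D v).
{ eexists; intro v; split.
  - unfold curvature. auto_derive; [repeat split; auto; sum_sq_side | reflexivity].
  - auto_derive. repeat split; auto; sum_sq_side. }
destruct HD as [D HD]. split; [exists (D u); apply HD |].
apply (ex_derive_ext D); [| apply HD].
intro v. symmetry. apply is_derive_unique, HD.
Qed.

Lemma ex_derive_arclength_Derive u :
  ex_derive (fun v => Derive (fun r => curvature X Y r * a r ^ 2) v / sqrt (X v ^ 2 + Y v ^ 2)) u.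
Proof.
apply (ex_derive_ext (fun v => (Derive (curvature X Y) v * a v ^ 2
                                + curvature X Y v * (2 * a v * Derive a v)) / sqrt (X v ^ 2 + Y v ^ 2))).
- intro v. f_equal. symmetry. apply is_derive_unique.
  destruct (ex_derive_curvature v). auto_derive; [repeat split; auto |]. eta_Derive. ring.
- destruct (ex_derive_curvature u). auto_derive. repeat split; auto; sum_sq_side.
Qed.

(* A component of the right-hand side of the geodesic equation: [(U, V)] is the component
   [(c_theta, i c_theta)] along a fixed axis, so that the hypotheses are the Frenet equations,
   and the function is [P n + A Q m] with [n = U/s], [m = V/s] and [Q = (k a^2)_s]. *)
Lemma Derive_geodesic_rhs_component A (k s K2 U V : R -> R) th :
  k = curvature X Y -> s = (fun u => sqrt (X u ^ 2 + Y u ^ 2)) -> (forall u, K2 u = a u ^ 2) ->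
  is_derive (fun u => U u / s u) th (k th * V th) ->
  is_derive (fun u => V u / s u) th (- (k th * U th)) ->
  Derive (fun u => (-1 + A * k u ^ 2) / 2 * (K2 u / s u) * U u
                   + A * (Derive (fun r => k r * K2 r) u / s u ^ 2) * V u) th
  = (A * k th * Derive k th * a th ^ 2 + (-1 + A * k th ^ 2) * a th * Derive a th) * (U th / s th)
    + (-1 + A * k th ^ 2) / 2 * a th ^ 2 * (k th * V th)
    + A * (Derive (fun u => Derive (fun r => k r * a r ^ 2) u / s u) th * (V th / s th)
           + (Derive k th * a th ^ 2 + k th * (2 * a th * Derive a th)) / s th * (- (k th * U th))).
Proof.
intros -> -> HK2 HU HV.
set (k := curvature X Y).
set (Q := fun u => Derive (fun r => k r * a r ^ 2) u / sqrt (X u ^ 2 + Y u ^ 2)).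
rewrite (Derive_ext _ (fun u => (-1 + A * k u ^ 2) / 2 * a u ^ 2 * (U u / sqrt (X u ^ 2 + Y u ^ 2))
                                + A * Q u * (V u / sqrt (X u ^ 2 + Y u ^ 2)))).
2: { intro u. unfold Q. rewrite (Derive_ext (fun r => k r * K2 r) (fun r => k r * a r ^ 2))
       by (intro r; now rewrite HK2).
     rewrite HK2. field. apply Rgt_not_eq, sqrt_lt_R0, Hpos. }
destruct (ex_derive_curvature th) as [Hk1 Hk2].
assert (HP : is_derive (fun u => (-1 + A * k u ^ 2) / 2 * a u ^ 2) th
               (A * k th * Derive k th * a th ^ 2 + (-1 + A * k th ^ 2) * a th * Derive a th)).
{ auto_derive; [repeat split; auto |]. eta_Derive. field. }
assert (HQ : Q th = (Derive k th * a th ^ 2 + k th * (2 * a th * Derive a th)) / sqrt (X th ^ 2 + Y th ^ 2)).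
{ unfold Q. f_equal. apply is_derive_unique. auto_derive; [repeat split; auto |]. eta_Derive. ring. }
rewrite <- HQ.
assert (HQ' : is_derive Q th (Derive Q th)) by exact (Derive_correct _ _ (ex_derive_arclength_Derive th)).
pose proof (is_derive_Rplus _ _ _ _ _ (is_derive_Rmult _ _ _ _ _ HP HU)
              (is_derive_Rmult _ _ _ _ _ (is_derive_scal _ _ A _ HQ') HV)) as H.
etransitivity; [exact (is_derive_unique _ _ _ H) |]. cbv beta. unfold k. ring.
Qed.
End ArcSlice.

Lemma ex_derive_kappa_t cx cy t th : smooth2 cx -> smooth2 cy ->
  0 < pth cx t th ^ 2 + pth cy t th ^ 2 -> ex_derive (fun r => kappa cx cy r th) t.
Proof.
intros Hx Hy Hp.
pose proof (smooth2_ex_derive_t cx (false :: nil) t th Hx).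
pose proof (smooth2_ex_derive_t cy (false :: nil) t th Hy).
pose proof (smooth2_ex_derive_t cx (false :: false :: nil) t th Hx).
pose proof (smooth2_ex_derive_t cy (false :: false :: nil) t th Hy).
unfold kappa, speed. auto_derive. repeat split; auto; sum_sq_side.
Qed.

Lemma ex_derive_speed_t cx cy t th : smooth2 cx -> smooth2 cy ->
  0 < pth cx t th ^ 2 + pth cy t th ^ 2 -> ex_derive (fun r => speed cx cy r th) t.
Proof.
intros Hx Hy Hp.
eexists. exact (is_derive_norm (fun r => pth cx r th) (fun r => pth cy r th) t
  (smooth2_ex_derive_t cx (false :: nil) t th Hx) (smooth2_ex_derive_t cy (false :: nil) t th Hy) Hp).
Qed.

Lemma sum_sq_pos x y : (x, y) <> (0, 0) -> 0 < x ^ 2 + y ^ 2.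
Proof.
intros Hxy.
destruct (Req_dec x 0) as [-> | Hx].
- destruct (Req_dec y 0) as [-> | Hy]; [now contradiction Hxy |].
  pose proof (pow2_gt_0 y Hy). lra.
- pose proof (pow2_gt_0 x Hx). pose proof (pow2_ge_0 y). lra.
Qed.

Lemma eq0_of_mul_nonzero_vector r x y :
  0 < x ^ 2 + y ^ 2 -> r * x = 0 -> r * - y = 0 -> r = 0.
Proof.
intros Hp Hx Hy. apply (Rmult_eq_reg_r (x ^ 2 + y ^ 2)); [| lra].
replace (r * (x ^ 2 + y ^ 2)) with (r * x * x - r * - y * y) by ring.
rewrite Hx, Hy. ring.
Qed.

Definition a_residual (A : R) (cx cy a : F2) (t th : R) : R :=
  pt (fun t th => (1 + A * kappa cx cy t th ^ 2) * a t th) t th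
  - ((1 + 3 * A * kappa cx cy t th ^ 2) / 2 * kappa cx cy t th * a t th ^ 2
     + A * ds cx cy (ds cx cy (fun t th => kappa cx cy t th * a t th ^ 2)) t th).

Lemma a_eq_iff_residual A cx cy a t th : a_eq A cx cy a t th <-> a_residual A cx cy a t th = 0.
Proof. unfold a_eq, a_residual. split; intro H; lra. Qed.

Section HorizontalPath.
Variables (A t0 t1 : R) (cx cy a : F2).
Hypotheses (Ht01 : t0 < t1) (Hcx : smooth2 cx) (Hcy : smooth2 cy) (Ha : smooth2 a)
  (Himm : forall t th, t0 <= t <= t1 -> (pth cx t th, pth cy t th) <> (0, 0))
  (Hct : forall t th, t0 <= t <= t1 ->
     pt cx t th = a t th * (- pth cy t th) / speed cx cy t th /\
     pt cy t th = a t th * pth cx t th / speed cx cy t th).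

Let Hpos t th (Ht : t0 <= t <= t1) : 0 < pth cx t th ^ 2 + pth cy t th ^ 2 :=
  sum_sq_pos _ _ (Himm t th Ht).

Lemma speed_pos t th : t0 <= t <= t1 -> 0 < speed cx cy t th.
Proof. intros Ht. now apply sqrt_lt_R0, Hpos. Qed.

Lemma speed_sq t th : t0 <= t <= t1 -> speed cx cy t th ^ 2 = pth cx t th ^ 2 + pth cy t th ^ 2.
Proof. intros Ht. apply pow2_sqrt. pose proof (Hpos t th Ht). lra. Qed.

Lemma ct2_eq_sq t th : t0 <= t <= t1 -> ct2 cx cy t th = a t th ^ 2.
Proof.
intros Ht. unfold ct2. destruct (Hct t th Ht) as [-> ->].
pose proof (speed_pos t th Ht).
field_simplify; [| lra]. rewrite speed_sq by exact Ht. field. pose proof (Hpos t th Ht). lra.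
Qed.

Let smooth_cx t : smooth1 (pth cx t) := smooth1_Derive _ (smooth2_slice cx t Hcx).
Let smooth_cy t : smooth1 (pth cy t) := smooth1_Derive _ (smooth2_slice cy t Hcy).
Let smooth_a t : smooth1 (a t) := smooth2_slice a t Ha.

(* [c_theta_t = (c_t)_theta = (a i n)_theta = a_theta i n - a kappa |c_theta| n] *)
Lemma pt_pth_cx t th : t0 <= t <= t1 ->
  pt (pth cx) t th
  = Derive (a t) th * (- pth cy t th / speed cx cy t th) + a t th * - (kappa cx cy t th * pth cx t th).
Proof.
intros Ht. rewrite smooth2_pt_pth by exact Hcx.
unfold pth at 1.
rewrite (Derive_ext (fun s => pt cx t s) (fun u => a t u * (- pth cy t u / speed cx cy t u)))
  by (intro u; rewrite (proj1 (Hct t u Ht)); unfold Rdiv; ring).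
apply is_derive_unique, (is_derive_Rmult (a t) (fun u => - pth cy t u / speed cx cy t u)).
- exact (Derive_correct _ _ (smooth_a t 1%nat th)).
- exact (is_derive_normal_x (pth cx t) (pth cy t) th (smooth_cx t 1%nat th) (smooth_cy t 1%nat th) (Hpos t th Ht)).
Qed.

Lemma pt_pth_cy t th : t0 <= t <= t1 ->
  pt (pth cy) t th
  = Derive (a t) th * (pth cx t th / speed cx cy t th) + a t th * - (kappa cx cy t th * pth cy t th).
Proof.
intros Ht. rewrite smooth2_pt_pth by exact Hcy.
unfold pth at 1.
rewrite (Derive_ext (fun s => pt cy t s) (fun u => a t u * (pth cx t u / speed cx cy t u)))
  by (intro u; rewrite (proj2 (Hct t u Ht)); unfold Rdiv; ring).
apply is_derive_unique, (is_derive_Rmult (a t) (fun u => pth cx t u / speed cx cy t u)).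
- exact (Derive_correct _ _ (smooth_a t 1%nat th)).
- exact (is_derive_normal_y (pth cx t) (pth cy t) th (smooth_cx t 1%nat th) (smooth_cy t 1%nat th) (Hpos t th Ht)).
Qed.

Lemma pt_speed t th : t0 <= t <= t1 ->
  pt (speed cx cy) t th = - a t th * kappa cx cy t th * speed cx cy t th.
Proof.
intros Ht.
etransitivity.
{ exact (is_derive_unique _ _ _ (is_derive_norm (fun r => pth cx r th) (fun r => pth cy r th) t
           (smooth2_ex_derive_t cx (false :: nil) t th Hcx) (smooth2_ex_derive_t cy (false :: nil) t th Hcy)
           (Hpos t th Ht))). }
cbv beta. fold (speed cx cy t th).
change (Derive (fun r => pth cx r th) t) with (pt (pth cx) t th).
change (Derive (fun r => pth cy r th) t) with (pt (pth cy) t th).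
rewrite pt_pth_cx, pt_pth_cy by exact Ht.
pose proof (speed_pos t th Ht).
transitivity (- a t th * kappa cx cy t th * (pth cx t th ^ 2 + pth cy t th ^ 2) / speed cx cy t th).
- field. lra.
- rewrite <- speed_sq by exact Ht. field. lra.
Qed.

Lemma Derive_weighted_velocity t th (w V : R -> R) : t0 <= t <= t1 ->
  ex_derive w t -> ex_derive V t ->
  (forall r, t0 <= r <= t1 -> w r = a r th * V r / speed cx cy r th) ->
  Derive (fun r => (1 + A * kappa cx cy r th ^ 2) * speed cx cy r th * w r) t
  = pt (fun t th => (1 + A * kappa cx cy t th ^ 2) * a t th) t th * V t
    + (1 + A * kappa cx cy t th ^ 2) * a t th * Derive V t.
Proof.
intros Ht Hw HV Hrel.
pose proof (ex_derive_kappa_t cx cy t th Hcx Hcy (Hpos t th Ht)).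
pose proof (ex_derive_speed_t cx cy t th Hcx Hcy (Hpos t th Ht)).
pose proof (smooth2_ex_derive_t a nil t th Ha).
assert (HG : ex_derive (fun r => (1 + A * kappa cx cy r th ^ 2) * a r th) t)
  by (auto_derive; repeat split; auto).
rewrite (Derive_eq_on_interval _ (fun r => (1 + A * kappa cx cy r th ^ 2) * a r th * V r) t0 t1 t Ht01 Ht).
- exact (Derive_mult _ V t HG HV).
- auto_derive. repeat split; auto.
- exact (ex_derive_mult _ V t HG HV).
- intros r Hr. rewrite Hrel by exact Hr. field. apply Rgt_not_eq, speed_pos, Hr.
Qed.

Lemma geodesic_lhs_x t th : t0 <= t <= t1 ->
  pt (fun t th => (1 + A * kappa cx cy t th ^ 2) * speed cx cy t th * pt cx t th) t th
  = pt (fun t th => (1 + A * kappa cx cy t th ^ 2) * a t th) t th * - pth cy t th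
    + (1 + A * kappa cx cy t th ^ 2) * a t th * - pt (pth cy) t th.
Proof.
intros Ht.
etransitivity.
{ apply (Derive_weighted_velocity t th (fun r => pt cx r th) (fun r => - pth cy r th) Ht).
  - exact (smooth2_ex_derive_t cx (true :: nil) t th Hcx).
  - exact (ex_derive_opp (fun r => pth cy r th) t (smooth2_ex_derive_t cy (false :: nil) t th Hcy)).
  - intros r Hr. apply Hct, Hr. }
now rewrite Derive_opp.
Qed.

Lemma geodesic_lhs_y t th : t0 <= t <= t1 ->
  pt (fun t th => (1 + A * kappa cx cy t th ^ 2) * speed cx cy t th * pt cy t th) t th
  = pt (fun t th => (1 + A * kappa cx cy t th ^ 2) * a t th) t th * pth cx t th
    + (1 + A * kappa cx cy t th ^ 2) * a t th * pt (pth cx) t th.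
Proof.
intros Ht.
apply (Derive_weighted_velocity t th (fun r => pt cy r th) (fun r => pth cx r th) Ht).
- exact (smooth2_ex_derive_t cy (true :: nil) t th Hcy).
- exact (smooth2_ex_derive_t cx (false :: nil) t th Hcx).
- intros r Hr. apply Hct, Hr.
Qed.

Lemma geodesic_residual_x t th : t0 <= t <= t1 ->
  pt (fun t th => (1 + A * kappa cx cy t th ^ 2) * speed cx cy t th * pt cx t th) t th
  - pth (fun t th => (-1 + A * kappa cx cy t th ^ 2) / 2 * (ct2 cx cy t th / speed cx cy t th) * pth cx t th
                     + A * (pth (fun t th => kappa cx cy t th * ct2 cx cy t th) t th / speed cx cy t th ^ 2)
                       * - pth cy t th) t th
  = a_residual A cx cy a t th * - pth cy t th.
Proof.
intros Ht.
rewrite geodesic_lhs_x, pt_pth_cy by exact Ht.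
etransitivity.
{ apply (f_equal (Rminus _)).
  exact (Derive_geodesic_rhs_component (pth cx t) (pth cy t) (a t) (smooth_cx t) (smooth_cy t) (smooth_a t)
           (fun v => Hpos t v Ht) A (kappa cx cy t) (speed cx cy t) (ct2 cx cy t) (pth cx t) (fun u => - pth cy t u) th
           eq_refl eq_refl (fun u => ct2_eq_sq t u Ht)
           (is_derive_tangent_x _ _ th (smooth_cx t 1%nat th) (smooth_cy t 1%nat th) (Hpos t th Ht))
           (is_derive_normal_x _ _ th (smooth_cx t 1%nat th) (smooth_cy t 1%nat th) (Hpos t th Ht))). }
pose proof (speed_pos t th Ht).
unfold a_residual, ds, pt, pth. cbv beta. field. lra.
Qed.

Lemma geodesic_residual_y t th : t0 <= t <= t1 ->
  pt (fun t th => (1 + A * kappa cx cy t th ^ 2) * speed cx cy t th * pt cy t th) t th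
  - pth (fun t th => (-1 + A * kappa cx cy t th ^ 2) / 2 * (ct2 cx cy t th / speed cx cy t th) * pth cy t th
                     + A * (pth (fun t th => kappa cx cy t th * ct2 cx cy t th) t th / speed cx cy t th ^ 2)
                       * pth cx t th) t th
  = a_residual A cx cy a t th * pth cx t th.
Proof.
intros Ht.
rewrite geodesic_lhs_y, pt_pth_cx by exact Ht.
etransitivity.
{ apply (f_equal (Rminus _)).
  exact (Derive_geodesic_rhs_component (pth cx t) (pth cy t) (a t) (smooth_cx t) (smooth_cy t) (smooth_a t)
           (fun v => Hpos t v Ht) A (kappa cx cy t) (speed cx cy t) (ct2 cx cy t) (pth cy t) (pth cx t) th
           eq_refl eq_refl (fun u => ct2_eq_sq t u Ht)
           (is_derive_tangent_y _ _ th (smooth_cx t 1%nat th) (smooth_cy t 1%nat th) (Hpos t th Ht))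
           (is_derive_normal_y _ _ th (smooth_cx t 1%nat th) (smooth_cy t 1%nat th) (Hpos t th Ht))). }
pose proof (speed_pos t th Ht).
unfold a_residual, ds, pt, pth. cbv beta. field. lra.
Qed.

Lemma geodesic_eq_iff_a_eq t th : t0 <= t <= t1 -> geodesic_eq A cx cy t th <-> a_eq A cx cy a t th.
Proof.
intros Ht. rewrite a_eq_iff_residual.
pose proof (geodesic_residual_x t th Ht) as Rx.
pose proof (geodesic_residual_y t th Ht) as Ry.
split.
- intros [Ex Ey].
  assert (a_residual A cx cy a t th * - pth cy t th = 0) by (rewrite <- Rx; apply Rminus_diag_eq, Ex).
  assert (a_residual A cx cy a t th * pth cx t th = 0) by (rewrite <- Ry; apply Rminus_diag_eq, Ey).
  now apply (eq0_of_mul_nonzero_vector _ (pth cx t th) (pth cy t th) (Hpos t th Ht)).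
- intros Hr. split; apply Rminus_diag_uniq.
  + etransitivity; [exact Rx |]. rewrite Hr. ring.
  + etransitivity; [exact Ry |]. rewrite Hr. ring.
Qed.
End HorizontalPath.

Theorem mainTheorem16 (A t0 t1 : R) (cx cy a : R -> R -> R) :
  0 <= A -> t0 < t1 ->
  smooth2 cx -> smooth2 cy -> smooth2 a ->
  periodic2 cx -> periodic2 cy -> periodic2 a ->
  (forall t th, t0 <= t <= t1 -> (pth cx t th, pth cy t th) <> (0, 0)) ->
  (forall t th, t0 <= t <= t1 ->
     pt cx t th * pth cx t th + pt cy t th * pth cy t th = 0) ->
  (forall t th, t0 <= t <= t1 ->
     pt cx t th = a t th * (- pth cy t th) / speed cx cy t th /\
     pt cy t th = a t th * pth cx t th / speed cx cy t th) ->
  ((forall t th, t0 <= t <= t1 -> geodesic_eq A cx cy t th) <->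
   (forall t th, t0 <= t <= t1 -> a_eq A cx cy a t th)) /\
  (forall t th, t0 <= t <= t1 ->
     pt (speed cx cy) t th = - a t th * kappa cx cy t th * speed cx cy t th).
Proof.
intros _ Ht01 Hcx Hcy Ha _ _ _ Himm _ Hct.
split.
- split; intros H t th Ht; apply (geodesic_eq_iff_a_eq A t0 t1 cx cy a Ht01 Hcx Hcy Ha Himm Hct t th Ht); auto.
- exact (pt_speed t0 t1 cx cy a Hcx Hcy Ha Himm Hct).
Qed.
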